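(* Let $x_0\in X$ and for $r\ge0$ let $P_r$ be the orthogonal projection of $\ell^2(X)$ onto $\ell^2(Q_r(x_0))=\{\psi\in\ell^2(X):\psi(x)=0\text{ for }x\notin Q_r(x_0)\}$. Let $e^{(r)}_1\le\dots\le e^{(r)}_{N_r}$ be the eigenvalues (with multiplicity) of $P_r\Delta P_r$ acting on the $N_r$-dimensional space $\ell^2(Q_r(x_0))$, and $\nu_r=\frac1{N_r}\sum_{s=1}^{N_r}\delta(e^{(r)}_s)$. Then $\nu_r$ converges weak-* as $r\to\infty$ to the measure $\mu=\sum_{r=0}^\infty(\frac1{N_r}-\frac1{N_{r+1}})\delta(\lambda_r)$.
   Context: $X$ is an infinite countable set, $\delta_x$ is the Kronecker delta at $x\in X$. $\mathbf n=(n_r)_{r\ge0}$ is a sequence of positive integers and $\mathbf P=(\mathcal P_r)_{r\ge0}$ a sequence of partitions of $X$ (elements of $\mathcal P_r$ are ''clusters of rank $r$''). $(X,\mathbf P,\mathbf n)$ is a hierarchical structure if: (i) $n_0=1$ and every cluster in $\mathcal P_0$ is a singleton; (ii) for $r\ge1$ every cluster in $\mathcal P_r$ is a disjoint union of exactly $n_r$ clusters of $\mathcal P_{r-1}$; (iii) any two points $x,y\in X$ lie in a common cluster of some rank. Set $N_r=\prod_{s=0}^r n_s$, let $Q_r(x)$ be the unique rank-$r$ cluster containing $x$, and $d(x,y)=\min\{r: y\in Q_r(x)\}$. The averaging operators $E_r$ on $\ell^2(X)$ are $(E_r\psi)(x)=\frac1{N_r}\sum_{d(x,y)\le r}\psi(y)$.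 Let $(p_r)_{r\ge1}$ be positive numbers with $\sum_{r\ge1}p_r=1$, set $p_0=0$, $\lambda_r=\sum_{s=0}^r p_s$, and $\Delta=\sum_{r=0}^\infty p_rE_r$. $\delta(\lambda)$ denotes the Dirac mass at $\lambda$. *)

From HB Require Import structures.
From mathcomp Require Import all_boot all_order all_algebra.
From mathcomp Require Import all_classical all_reals all_analysis.
Set Implicit Arguments. Unset Strict Implicit. Unset Printing Implicit Defensive.
Import Order.TTheory GRing.Theory Num.Theory.
Local Open Scope classical_set_scope.
Local Open Scope ring_scope.

Section Hier.
Variable X : countType.

Definition is_partition (Pr : set (set X)) : Prop :=
  (forall C, Pr C -> C !=set0) /\
  (forall C D, Pr C -> Pr D -> C `&` D !=set0 -> C = D) /\
  (forall x, exists C, Pr C /\ C x).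

Definition hierarchical (P : nat -> set (set X)) (n : nat -> nat) : Prop :=
  (forall r, (0 < n r)%N) /\
  (forall r, is_partition (P r)) /\
  n 0%N = 1%N /\ (forall C, P 0%N C -> exists x, C = [set x]) /\
  (* (ii) every rank-r cluster is the disjoint union of exactly n_r
     (distinct, hence disjoint) rank-(r-1) clusters *)
  (forall r, (0 < r)%N -> forall C, P r C ->
     exists f : nat -> set X,
       (forall i j, (i < n r)%N -> (j < n r)%N -> f i = f j -> i = j) /\
       (forall i, (i < n r)%N -> P r.-1 (f i)) /\
       C = \bigcup_(i in [set i | (i < n r)%N]) f i) /\
  (forall x y, exists r C, P r C /\ C x /\ C y).

Definition Nr (n : nat -> nat) (r : nat) : nat := (\prod_(0 <= s < r.+1) n s)%N.

Definition Q (P : nat -> set (set X)) (r : nat) (x : X) : set X :=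
  [set y | exists C, P r C /\ C x /\ C y].

(* d(x,y) = min { r : y \in Q_r(x) };  {y | d(x,y) <= r} *)
Definition ball_d (P : nat -> set (set X)) (r : nat) (x : X) : set X :=
  [set y | exists s, (s <= r)%N /\ Q P s x y].

Variable R : realType.

Definition Eop (P : nat -> set (set X)) (n : nat -> nat) (r : nat)
  (psi : X -> R) (x : X) : R :=
  ((Nr n r)%:R)^-1 * \sum_(y \in ball_d P r x) psi y.

Definition Delta (P : nat -> set (set X)) (n : nat -> nat) (p : nat -> R)
  (psi : X -> R) (x : X) : R :=
  limn (fun m => \sum_(0 <= r < m) p r * Eop P n r psi x).

Definition kdelta (y : X) : X -> R := fun x => if x == y then 1 else 0.

(* matrix of P_r Delta P_r on l^2(Q_r(x0)) in the orthonormal basis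
   (delta_{s_i})_i, where s enumerates Q_r(x0) without repetition *)
Definition compr_mx (P : nat -> set (set X)) (n : nat -> nat) (p : nat -> R)
  (s : seq X) : 'M[R]_(size s) :=
  \matrix_(i < size s, j < size s)
     Delta P n p (kdelta (tnth (in_tuple s) j)) (tnth (in_tuple s) i).
End Hier.

From HB Require Import structures.
From mathcomp Require Import all_boot all_order all_algebra.
From mathcomp Require Import all_classical all_reals all_analysis.
Import Order.TTheory GRing.Theory Num.Theory numFieldNormedType.Exports.
Local Open Scope classical_set_scope.
Local Open Scope ring_scope.

Set Implicit Arguments. Unset Strict Implicit. Unset Printing Implicit Defensive.

(* On the block Q_r(x0), the averaging operator E_t acts for t <= r as the
   orthogonal projection B_t onto the functions that are constant on rank-t
   clusters, and for t > r as (N_r / N_t) B_r.  Hence P_r Delta P_r equals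
   sum_(t < r) p_t B_t + g_r B_r with g_r = N_r sum_(t >= r) p_t / N_t.
   As B_t B_u = B_(max t u), the differences B_k - B_(k+1) (k < r) and B_r are
   orthogonal idempotents summing to 1, with traces N_r (1/N_k - 1/N_(k+1)) and
   1, on which the matrix acts by lambda_k and lambda_(r-1) + g_r.  So the
   integral of f against nu_r is the r-th partial sum of its integral against
   mu plus f(lambda_(r-1) + g_r) / N_r, and N_r tends to infinity because X is
   infinite. *)

Section SpectralSum.
Variable F : fieldType.

Lemma char_poly_conjV n (V A : 'M[F]_n) : V \in unitmx ->
  char_poly (invmx V *m A *m V) = char_poly A.
Proof.
move=> Vu; set Vi' := map_mx polyC (invmx V); set V' := map_mx polyC V.
have ViV : Vi' *m V' = 1%:M by rewrite -map_mxM mulVmx // map_mx1.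
rewrite /char_poly.
have -> : char_poly_mx (invmx V *m A *m V) = Vi' *m char_poly_mx A *m V'.
  rewrite /char_poly_mx !map_mxM -/Vi' -/V' mulmxBr mulmxBl -!mulmxA.
  by rewrite mul_scalar_mx -scalemxAr ViV scalemx1.
by rewrite !det_mulmx mulrAC -det_mulmx ViV det1 mul1r.
Qed.

Lemma mxtrace_horner_diagonalizable n (A : 'M[F]_n.+1) (e : seq F) q :
  diagonalizable A -> char_poly A = \prod_(a <- e) ('X - a%:P) ->
  \tr (horner_mx A q) = \sum_(a <- e) q.[a].
Proof.
move=> [V Vu] /(similar_diagLR Vu) [D]; rewrite conjVmx // => AE Achar.
have e_diag : perm_eq e [seq D 0 i | i <- enum 'I_n.+1].
  apply: prod_XsubC_eq; rewrite -Achar AE char_poly_conjV //.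
  rewrite char_poly_trig ?diag_mx_is_trig // big_map big_enum /=.
  by apply: eq_bigr => i _; rewrite mxE eqxx mulr1n.
rewrite (perm_big _ e_diag) big_map big_enum /= AE horner_mx_uconjC //.
rewrite mxtrace_mulC mulmxA mulmxV // mul1mx horner_mx_diag mxtrace_diag.
by apply: eq_bigr => i _; rewrite mxE.
Qed.

Lemma interpolation K (x : 'I_K -> F) (h : F -> F) : injective x ->
  exists q : {poly F}, forall k, q.[x k] = h (x k).
Proof.
move=> x_inj; pose l k := \prod_(j | j != k) ('X - (x j)%:P).
have l_neq k j : j != k -> (l k).[x j] = 0.
  by move=> jk; rewrite horner_prod (bigD1 j) //= hornerXsubC subrr mul0r.
have l_eq k : (l k).[x k] != 0.
  rewrite horner_prod; apply/prodf_neq0 => j jk.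
  by rewrite hornerXsubC subr_eq0; apply: contra jk => /eqP /x_inj ->.
exists (\sum_k (h (x k) / (l k).[x k]) *: l k) => k.
rewrite horner_sum (bigD1 k) //= big1 ?addr0; first by rewrite hornerZ divfK.
by move=> j jk; rewrite hornerZ (l_neq j k) ?mulr0 // eq_sym.
Qed.

Section IdempotentCombination.
Variables (n K : nat) (Pi : 'I_K -> 'M[F]_n.+1) (mu : 'I_K -> F).
Hypothesis Pi_mul : forall k l, Pi k *m Pi l = if k == l then Pi k else 0.
Hypothesis Pi_sum : \sum_k Pi k = 1%:M.
Hypothesis mu_inj : injective mu.

Let M := \sum_k mu k *: Pi k.

Lemma horner_mx_idem_comb q : horner_mx M q = \sum_k q.[mu k] *: Pi k.
Proof.
have comb_mul a b : (\sum_k a k *: Pi k) *m (\sum_l b l *: Pi l) =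
    \sum_k (a k * b k) *: Pi k.
  rewrite mulmx_suml; apply: eq_bigr => k _.
  rewrite mulmx_sumr (bigD1 k) //= big1 ?addr0.
    by rewrite -scalemxAl -scalemxAr Pi_mul eqxx scalerA.
  by move=> l lk; rewrite -scalemxAl -scalemxAr Pi_mul eq_sym (negbTE lk) !scaler0.
elim/poly_ind: q => [|q c IHq].
  by rewrite rmorph0; symmetry; apply: big1 => k _; rewrite horner0 scale0r.
rewrite rmorphD rmorphM /= horner_mx_X horner_mx_C IHq -mulmxE comb_mul.
rewrite -[c%:M]scalemx1 -Pi_sum scaler_sumr -big_split; apply: eq_bigr => k _.
by rewrite hornerMXaddC scalerDl.
Qed.

Let q_mu := \prod_(a <- [seq mu k | k <- enum 'I_K]) ('X - a%:P).

Lemma horner_mx_idem_comb_roots : horner_mx M q_mu = 0.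
Proof.
rewrite horner_mx_idem_comb; apply: big1 => k _.
suff /eqP -> : root q_mu (mu k) by rewrite scale0r.
by rewrite root_prod_XsubC map_f ?mem_enum.
Qed.

Lemma idem_comb_diagonalizable : diagonalizable M.
Proof.
apply/diagonalizableP; exists [seq mu k | k <- enum 'I_K].
  by rewrite (map_inj_uniq mu_inj) enum_uniq.
exact/mxminpoly_min/horner_mx_idem_comb_roots.
Qed.

Lemma eigenvalue_idem_comb a : root (char_poly M) a -> exists k, a = mu k.
Proof.
rewrite -root_mxminpoly => /(root_dvdp (mxminpoly_min horner_mx_idem_comb_roots)).
by rewrite root_prod_XsubC => /mapP [k _ ->]; exists k.
Qed.

End IdempotentCombination.

Lemma sum_eigenvalues_idem_comb N K (Pi : 'I_K -> 'M[F]_N) (mu : 'I_K -> F)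
    (e : seq F) (h : F -> F) :
  (forall k l, Pi k *m Pi l = if k == l then Pi k else 0) ->
  \sum_k Pi k = 1%:M -> injective mu ->
  char_poly (\sum_k mu k *: Pi k) = \prod_(a <- e) ('X - a%:P) ->
  \sum_(a <- e) h a = \sum_k \tr (Pi k) * h (mu k).
Proof.
case: N Pi => [|N] Pi Pi_mul Pi_sum mu_inj Me.
  have /size0nil -> : size e = 0%N.
    by apply/eqP; rewrite -eqSS -(size_prod_XsubC e id) -Me size_char_poly.
  by rewrite big_nil big1 // => k _; rewrite /mxtrace big_ord0 mul0r.
have [q qE] := interpolation h mu_inj.
transitivity (\sum_(a <- e) q.[a]).
  apply: eq_big_seq => a ae.
  have a_root : root (char_poly (\sum_k mu k *: Pi k)) a.
    by rewrite Me root_prod_XsubC.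
  by have [k ->] := eigenvalue_idem_comb Pi_mul Pi_sum a_root; rewrite qE.
have M_diag := idem_comb_diagonalizable Pi_mul Pi_sum mu_inj.
rewrite -(mxtrace_horner_diagonalizable _ M_diag Me).
rewrite horner_mx_idem_comb // raddf_sum; apply: eq_bigr => k _ /=.
by rewrite mxtraceZ qE mulrC.
Qed.

End SpectralSum.

Lemma sum_partial_sums_scale_diff (F : pzRingType) (V : lmodType F)
    (p : nat -> F) (B : nat -> V) r :
  \sum_(k < r) (\sum_(0 <= t < k.+1) p t) *: (B k - B k.+1) =
  \sum_(0 <= t < r) p t *: B t - (\sum_(0 <= t < r) p t) *: B r.
Proof.
elim: r => [|r IHr]; first by rewrite big_ord0 !big_geq // scale0r subr0.
rewrite big_ord_recr /= IHr !big_nat_recr //= scalerBr scalerDl.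
by rewrite !addrA subrK.
Qed.

Section ProjectionChain.
Variables (F : fieldType) (N r : nat) (B : nat -> 'M[F]_N).
Hypothesis B_mul :
  forall a b, (a <= r)%N -> (b <= r)%N -> B a *m B b = B (maxn a b).

Definition chain_proj k := if (k < r)%N then B k - B k.+1 else B r.

Lemma chain_proj_mulB k j : (k <= r)%N -> (j <= r)%N ->
  chain_proj k *m B j = if (j <= k)%N then chain_proj k else 0.
Proof.
rewrite /chain_proj; case: ltnP => [k_lt_r|r_le_k] k_le_r j_le_r.
  rewrite mulmxBl !B_mul //; case: leqP => jk.
    by rewrite (maxn_idPl (leqW jk)).
  by rewrite (maxn_idPr jk) subrr.
by rewrite B_mul // (maxn_idPl j_le_r) (leq_trans j_le_r r_le_k).
Qed.

Lemma chain_proj_mul k l : (k <= r)%N -> (l <= r)%N ->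
  chain_proj k *m chain_proj l = if k == l then chain_proj k else 0.
Proof.
move=> kr lr; rewrite {2}/chain_proj; case: ltnP => [lr'|rl].
  by rewrite mulmxBr !chain_proj_mulB //; case: ltngtP; rewrite ?subrr ?subr0.
have -> : l = r by apply/eqP; rewrite eqn_leq lr.
by rewrite chain_proj_mulB // eqn_leq kr.
Qed.

Lemma sum_chain_proj : \sum_(k < r.+1) chain_proj k = B 0.
Proof.
rewrite big_ord_recr /= /chain_proj ltnn.
under eq_bigr => k _ do rewrite ltn_ord.
rewrite -(big_mkord xpredT (fun k => B k - B k.+1)).
rewrite (@telescope_sumr_eq _ 0 r (fun k => - B k)) //; last first.
  by move=> k _; rewrite opprK addrC.
by rewrite opprK addrAC addNr add0r.
Qed.

Lemma chain_proj_comb (p : nat -> F) g :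
  \sum_(k < r.+1) (if (k < r)%N then \sum_(0 <= t < k.+1) p t
                   else \sum_(0 <= t < r) p t + g) *: chain_proj k =
  \sum_(0 <= t < r) p t *: B t + g *: B r.
Proof.
rewrite big_ord_recr /= /chain_proj ltnn.
under eq_bigr => k _ do rewrite ltn_ord.
by rewrite sum_partial_sums_scale_diff scalerDl addrA subrK.
Qed.

End ProjectionChain.

Lemma count_sum (T : eqType) (S : seq T) (a : pred T) K (b : 'I_K -> pred T) :
  (forall y, a y = \sum_(i < K) b i y :> nat)%N ->
  count a S = (\sum_(i < K) count (b i) S)%N.
Proof.
move=> ab; elim: S => [|y S IHS] /=; first by rewrite big1.
by rewrite IHS ab -big_split.
Qed.

Section Hierarchy.
Variables (X : countType) (P : nat -> set (set X)) (n : nat -> nat).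
Hypothesis hP : hierarchical P n.

Lemma cluster_eq r C D x : P r C -> P r D -> C x -> D x -> C = D.
Proof.
case: hP => _ [part _] PC PD Cx Dx.
by have [_ [disj _]] := part r; apply: disj => //; exists x.
Qed.

Lemma cluster_cover r x : exists C, P r C /\ C x.
Proof. by case: hP => _ [part _]; have [_ [_ cov]] := part r; apply: cov. Qed.

Lemma Q_cluster_eq r C x : P r C -> C x -> Q P r x = C.
Proof.
move=> PC Cx; apply/seteqP; split => y /=; last by exists C.
by case=> D [PD [Dx Dy]]; rewrite (cluster_eq PC PD Cx Dx).
Qed.

Lemma Q_cluster r x : P r (Q P r x).
Proof. by have [C [PC Cx]] := cluster_cover r x; rewrite (Q_cluster_eq PC Cx). Qed.

Lemma Q_refl r x : Q P r x x.
Proof. by have [C [PC Cx]] := cluster_cover r x; exists C. Qed.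

Lemma Q_sym r x y : Q P r x y -> Q P r y x.
Proof. by case=> C [PC [Cx Cy]]; exists C. Qed.

Lemma Q_trans r x y z : Q P r x y -> Q P r y z -> Q P r x z.
Proof.
case=> C [PC [Cx Cy]] [D [PD [Dy Dz]]]; exists C; split => //; split => //.
by rewrite (cluster_eq PC PD Cy Dy).
Qed.

Lemma Q0_eq x y : Q P 0 x y -> x = y.
Proof.
case: (hP) => _ [_ [_ [P0 _]]] [C [PC [Cx Cy]]].
by have [z Cz] := P0 C PC; move: Cx Cy; rewrite Cz /= => -> ->.
Qed.

Lemma cluster_split r C : P r.+1 C ->
  exists f : 'I_(n r.+1) -> set X, [/\ forall i, P r (f i),
    forall i, f i `<=` C &
    forall y, C y -> exists i, f i y /\ forall j, f j y -> j = i].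
Proof.
case: (hP) => _ [_ [_ [_ [split _]]]] PC.
have [f [f_inj [Pf CE]]] := split r.+1 isT C PC.
exists (fun i => f i); split => [i|i y fy|y]; first exact: Pf.
  by rewrite CE; exists i => //; exact: ltn_ord.
rewrite CE => -[i /= ilt fy]; exists (Ordinal ilt); split => // j fjy.
apply: val_inj; apply: (f_inj _ _ (ltn_ord j) ilt).
exact: (cluster_eq (Pf _ (ltn_ord j)) (Pf _ ilt) fjy fy).
Qed.

Lemma Q_succ r x y : Q P r x y -> Q P r.+1 x y.
Proof.
case=> C [PC [Cx Cy]]; have [D [PD Dx]] := cluster_cover r.+1 x.
have [f [Pf fD /(_ x Dx) [i [fx _]]]] := cluster_split PD.
exists D; split => //; split => //; apply: (fD i).
by rewrite -(cluster_eq PC (Pf i) Cx fx).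
Qed.

Lemma Q_mono r t x y : (r <= t)%N -> Q P r x y -> Q P t x y.
Proof.
move=> /subnK <-; elim: (t - r)%N => [//|k IHk] /IHk; rewrite addSn; exact: Q_succ.
Qed.

Lemma NrS r : Nr n r.+1 = (Nr n r * n r.+1)%N.
Proof. by rewrite /Nr big_nat_recr. Qed.

Lemma NrS_sum r : Nr n r.+1 = (\sum_(i < n r.+1) Nr n r)%N.
Proof. by rewrite sum_nat_const card_ord NrS mulnC. Qed.

Lemma Nr0 : Nr n 0 = 1%N.
Proof. by case: hP => _ [_ [n0 _]]; rewrite /Nr big_nat1. Qed.

Lemma Nr_gt0 r : (0 < Nr n r)%N.
Proof.
case: hP => n_gt0 _; elim: r => [|r IHr]; first by rewrite Nr0.
by rewrite NrS muln_gt0 IHr n_gt0.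
Qed.

Lemma Nr_mono a b : (a <= b)%N -> (Nr n a <= Nr n b)%N.
Proof.
move=> /subnK <-; elim: (b - a)%N => [//|k IHk]; rewrite addSn NrS.
by case: hP => n_gt0 _; apply: leq_trans IHk _; rewrite leq_pmulr.
Qed.

Lemma count_cluster_split r C (S : seq X) : P r.+1 C ->
  exists f : 'I_(n r.+1) -> set X, [/\ forall i, P r (f i),
    forall i, f i `<=` C &
    count (fun y => `[< C y >]) S = (\sum_i count (fun y => `[< f i y >]) S)%N].
Proof.
move=> /cluster_split [f [Pf fC Cf]]; exists f; split => //.
apply: count_sum => y; case: (asboolP (C y)) => [Cy|nCy].
  have [i [fiy fi_uniq]] := Cf y Cy; rewrite (bigD1 i) //= big1 ?addn0.
    by rewrite asboolT.
  by move=> j ji; rewrite asboolF // => /fi_uniq /eqP; rewrite (negbTE ji).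
by rewrite big1 // => i _; rewrite asboolF // => /fC.
Qed.

Lemma count_cluster_le r C (S : seq X) : P r C -> uniq S ->
  (count (fun y => `[< C y >]) S <= Nr n r)%N.
Proof.
elim: r C => [|r IHr] C PC uS.
  case: (hP) => _ [_ [_ [P0 _]]]; have [z ->] := P0 C PC; rewrite Nr0.
  rewrite (eq_count (a2 := pred1 z)) ?count_uniq_mem ?leq_b1 // => y.
  exact/asboolP/eqP.
have [f [Pf _ ->]] := count_cluster_split S PC.
by rewrite NrS_sum; apply: leq_sum => i _; apply: IHr.
Qed.

Lemma count_cluster r C (S : seq X) : P r C -> uniq S ->
  C `<=` [set y | y \in S] -> count (fun y => `[< C y >]) S = Nr n r.
Proof.
elim: r C => [|r IHr] C PC uS CS.
  case: (hP) => _ [_ [_ [P0 _]]]; have [z Cz] := P0 C PC.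
  have zS : z \in S by apply: CS; rewrite Cz.
  rewrite Nr0 (eq_count (a2 := pred1 z)) ?count_uniq_mem ?zS // => y.
  by rewrite Cz; exact/asboolP/eqP.
have [f [Pf fC ->]] := count_cluster_split S PC.
by rewrite NrS_sum; apply: eq_bigr => i _; apply: IHr => // y /fC /CS.
Qed.

End Hierarchy.

Section Laplacian.
Variables (R : realType) (X : countType) (P : nat -> set (set X)) (n : nat -> nat)
  (p : nat -> R).
Hypothesis hP : hierarchical P n.
Hypothesis p0 : p 0%N = 0.
Hypothesis p_gt0 : forall r, (0 < r)%N -> 0 < p r.
Hypothesis p_sum1 : (fun m => \sum_(0 <= r < m) p r) @ \oo --> (1 : R).

Lemma p_ge0 t : 0 <= p t.
Proof. by case: t => [|t]; [rewrite p0 | exact/ltW/p_gt0]. Qed.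

Lemma Nr_neq0 t : (Nr n t)%:R != 0 :> R.
Proof. by rewrite pnatr_eq0 -lt0n (Nr_gt0 hP). Qed.

Definition psum m := \sum_(0 <= t < m) p t.

Definition wsum m := \sum_(0 <= t < m) p t / (Nr n t)%:R.

Lemma psum_nondecr : nondecreasing_seq psum.
Proof. by apply: nondecreasing_series => t _ _; exact: p_ge0. Qed.

Lemma psum_le1 m : psum m <= 1.
Proof.
rewrite -(cvg_lim _ p_sum1) //.
exact: nondecreasing_cvgn_le psum_nondecr (cvgP _ p_sum1) m.
Qed.

Lemma psum_lt a b : (0 < a < b)%N -> psum a < psum b.
Proof.
case/andP=> a_gt0 ab; rewrite /psum (big_cat_nat (leq0n a) (ltnW ab)) /= ltrDl.
rewrite big_ltn // ltr_pwDl ?p_gt0 //; apply: sumr_ge0 => t _; exact: p_ge0.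
Qed.

Lemma wsum_nondecr : nondecreasing_seq wsum.
Proof. by apply: nondecreasing_series => t _ _; rewrite divr_ge0 ?p_ge0. Qed.

Lemma wsum_cvg : cvgn wsum.
Proof.
apply: nondecreasing_is_cvgn; first exact: wsum_nondecr.
exists 1 => _ [m _ <-]; apply: le_trans (psum_le1 m); apply: ler_sum => t _.
by rewrite ler_pdivrMr ?ltr0n ?(Nr_gt0 hP) // ler_peMr ?p_ge0 // ler1n (Nr_gt0 hP).
Qed.

Lemma wsum_le_lim m : wsum m <= limn wsum.
Proof. exact: nondecreasing_cvgn_le wsum_nondecr wsum_cvg m. Qed.

Lemma Eop_kdelta t x y : Eop P n t (kdelta R y) x =
  if `[< Q P t x y >] then (Nr n t)%:R^-1 else 0.
Proof.
have ball_Q : ball_d P t x = Q P t x.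
  apply/seteqP; split => [z [s [st Qs]]|z Qz]; last by exists t.
  exact: (Q_mono hP st Qs).
rewrite /Eop ball_Q; case: asboolP => [Qxy|nQxy].
  rewrite -(fsbig_widen [set y] (Q P t x) (kdelta R y)) => [||z [_ /= zy]].
  - by rewrite fsbig_set1 /kdelta eqxx mulr1.
  - by move=> z /= ->.
  - by rewrite /kdelta; case: eqP.
rewrite fsbig1 ?mulr0 // => z Qz; rewrite /kdelta; case: eqP => // zy.
by rewrite zy in Qz.
Qed.

Lemma Delta_kdelta r x y : Q P r x y ->
  Delta P n p (kdelta R y) x =
  \sum_(0 <= t < r) p t * (if `[< Q P t x y >] then (Nr n t)%:R^-1 else 0)
  + (limn wsum - wsum r).
Proof.
move=> Qr; apply: cvg_lim => //; rewrite addrCA addrC.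
set c := _ - wsum r.
have wsum_cvg_shift : (fun m => c + wsum m) @ \oo --> c + limn wsum.
  by apply: cvgD; [exact: cvg_cst | exact: wsum_cvg].
apply: (cvg_trans _ wsum_cvg_shift); apply: near_eq_cvg.
near=> m; have rm : (r <= m)%N by near: m; exists r.
under eq_bigr do rewrite Eop_kdelta.
rewrite /c /wsum !(big_cat_nat (leq0n r) rm) /= addrA subrK.
congr (_ + _); apply: eq_big_nat => t /andP [rt _].
by rewrite asboolT //; exact: (Q_mono hP rt Qr).
Unshelve. all: by end_near.
Qed.

Section Block.
Variables (r : nat) (x0 : X) (S : seq X).
Hypothesis S_uniq : uniq S.
Hypothesis S_Q : [set x | x \in S] = Q P r x0.

Let sx := tnth (in_tuple S).

Lemma mem_S y : y \in S <-> Q P r x0 y.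
Proof. by rewrite -S_Q. Qed.

Lemma sx_Q i : Q P r x0 (sx i).
Proof. exact/mem_S/mem_tnth. Qed.

Lemma sx_Q_pair t i j : (r <= t)%N -> Q P t (sx i) (sx j).
Proof.
move=> rt; apply: (Q_mono hP rt).
exact: (Q_trans hP (Q_sym (sx_Q i)) (sx_Q j)).
Qed.

Lemma count_Q t x : (t <= r)%N -> Q P r x0 x ->
  count (fun y => `[< Q P t x y >]) S = Nr n t.
Proof.
move=> tr Qx; apply: (count_cluster hP (Q_cluster hP t x) S_uniq) => y Qy.
exact/mem_S/(Q_trans hP Qx)/(Q_mono hP tr Qy).
Qed.

Lemma size_S : size S = Nr n r.
Proof.
rewrite -(count_predT S) -(count_Q (leqnn r) (Q_refl hP r x0)).
by apply: eq_in_count => y /mem_S Qy; rewrite asboolT.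
Qed.

Definition avg_mx t : 'M[R]_(size S) :=
  \matrix_(i, j) if `[< Q P t (sx i) (sx j) >] then (Nr n t)%:R^-1 else 0.

Lemma avg_mx_tr t : (avg_mx t)^T = avg_mx t.
Proof.
apply/matrixP => i j; rewrite !mxE; congr (if _ then _ else _).
by apply/asboolP/asboolP => /(Q_sym (P := P)).
Qed.

Lemma avg_mx_mul_le t u : (t <= u <= r)%N -> avg_mx t *m avg_mx u = avg_mx u.
Proof.
case/andP=> tu ur; apply/matrixP => i j; rewrite !mxE.
pose c := if `[< Q P u (sx i) (sx j) >] then (Nr n u)%:R^-1 else 0 : R.
transitivity
  (\sum_(y <- S) if `[< Q P t (sx i) y >] then (Nr n t)%:R^-1 * c else 0).
  rewrite [RHS]big_tnth; apply: eq_bigr => m _; rewrite !mxE.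
  case: (asboolP (Q P t (sx i) (sx m))) => [Qim|]; last by rewrite mul0r.
  have Qim_u := Q_mono hP tu Qim.
  suff -> : `[< Q P u (sx m) (sx j) >] = `[< Q P u (sx i) (sx j) >] by [].
  apply/asboolP/asboolP => [|Qij]; first exact: (Q_trans hP Qim_u).
  exact: (Q_trans hP (Q_sym Qim_u) Qij).
rewrite -big_mkcond big_const_seq iter_addr_0 count_Q ?(leq_trans tu) //.
  by rewrite -[(_ * c) *+ _]mulr_natr mulrAC mulVf ?Nr_neq0 ?mul1r.
exact: sx_Q.
Qed.

Lemma avg_mx_mul a b : (a <= r)%N -> (b <= r)%N ->
  avg_mx a *m avg_mx b = avg_mx (maxn a b).
Proof.
move=> ar br; case: leqP => [ab|ba]; first by rewrite avg_mx_mul_le ?ab.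
apply: trmx_inj; rewrite trmx_mul !avg_mx_tr avg_mx_mul_le //.
by rewrite (ltnW ba).
Qed.

Lemma avg_mx0 : avg_mx 0 = 1%:M.
Proof.
apply/matrixP => i j; rewrite !mxE (Nr0 hP) invr1.
have sx_inj : injective sx by apply/tuple_uniqP.
case: asboolP => [/(Q0_eq hP)/sx_inj ->|nQ]; first by rewrite eqxx.
by case: eqP => // ij; rewrite ij in nQ; case: nQ; exact: (Q_refl hP).
Qed.

Lemma mxtrace_avg_mx t : \tr (avg_mx t) = (size S)%:R / (Nr n t)%:R.
Proof.
rewrite /mxtrace (eq_bigr (fun=> (Nr n t)%:R^-1)) ?sumr_const ?card_ord.
  by rewrite mulr_natl.
by move=> i _; rewrite mxE asboolT //; exact: (Q_refl hP).
Qed.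

Definition tail_weight := (Nr n r)%:R * (limn wsum - wsum r).

Lemma compr_mx_avg :
  compr_mx P n p S = \sum_(0 <= t < r) p t *: avg_mx t + tail_weight *: avg_mx r.
Proof.
apply/matrixP => i j; rewrite !mxE (Delta_kdelta (sx_Q_pair i j (leqnn r))).
rewrite summxE; under [in RHS]eq_bigr do rewrite !mxE.
rewrite asboolT; last exact: sx_Q_pair.
by congr (_ + _); rewrite /tail_weight mulrAC mulfV ?Nr_neq0 ?mul1r.
Qed.

Lemma tail_weight_ge : p r <= tail_weight.
Proof.
have := wsum_le_lim r.+1; rewrite /wsum big_nat_recr //= -/(wsum r) => tail_ge.
rewrite /tail_weight -ler_pdivrMl ?ltr0n ?(Nr_gt0 hP) // mulrC.
by rewrite lerBrDl.
Qed.

Definition block_eigen (k : nat) :=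
  if (k < r)%N then psum k.+1 else psum r + tail_weight.

Lemma block_eigen_lt k l : (k < l <= r)%N -> block_eigen k < block_eigen l.
Proof.
case/andP=> kl lr; have kr := leq_trans kl lr.
rewrite /block_eigen kr; case: ltnP => [lr'|_]; first exact: psum_lt.
have r_gt0 : (0 < r)%N by apply: leq_ltn_trans kr.
apply: (le_lt_trans (psum_nondecr kr)).
by rewrite ltrDl (lt_le_trans (p_gt0 r_gt0) tail_weight_ge).
Qed.

Lemma block_eigen_inj : injective (fun k : 'I_r.+1 => block_eigen k).
Proof.
move=> k l /= Ekl; apply: val_inj; case: (ltngtP k l) => // [kl|lk].
  by have := @block_eigen_lt k l; rewrite kl leq_ord Ekl ltxx => /(_ isT).
by have := @block_eigen_lt l k; rewrite lk leq_ord Ekl ltxx => /(_ isT).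
Qed.

Lemma compr_mx_spectral :
  compr_mx P n p S = \sum_(k < r.+1) block_eigen k *: chain_proj r avg_mx k.
Proof. by rewrite compr_mx_avg -chain_proj_comb. Qed.

Lemma mean_compr_eigenvalues (e : seq R) (h : R -> R) :
  char_poly (compr_mx P n p S) = \prod_(a <- e) ('X - a%:P) ->
  (Nr n r)%:R^-1 * \sum_(a <- e) h a =
  \sum_(0 <= k < r) ((Nr n k)%:R^-1 - (Nr n k.+1)%:R^-1) * h (psum k.+1)
  + (Nr n r)%:R^-1 * h (psum r + tail_weight).
Proof.
rewrite compr_mx_spectral => Me.
have proj_mul (k l : 'I_r.+1) :=
  chain_proj_mul avg_mx_mul (leq_ord k) (leq_ord l).
have proj_sum : \sum_(k < r.+1) chain_proj r avg_mx k = 1%:M.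
  by rewrite sum_chain_proj avg_mx0.
rewrite (sum_eigenvalues_idem_comb h proj_mul proj_sum block_eigen_inj Me).
rewrite big_ord_recr /= /chain_proj /block_eigen ltnn mulrDr mulr_sumr big_mkord.
congr (_ + _); last by rewrite mxtrace_avg_mx size_S mulfV ?Nr_neq0 ?mul1r.
apply: eq_bigr => k _; rewrite ltn_ord raddfB /= !mxtrace_avg_mx size_S.
by rewrite -mulrBr !mulrA mulVf ?Nr_neq0 ?mul1r.
Qed.

End Block.
End Laplacian.

Lemma infinite_uniq_seq (T : eqType) K : infinite_set [set: T] ->
  exists s : seq T, uniq s /\ size s = K.
Proof.
move=> Tinf; elim: K => [|K [s [s_uniq s_size]]]; first by exists [::].
have [x xs] : exists x, x \notin s.
  apply: contrapT => all_in; apply: Tinf; apply/finite_seqP; exists s.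
  apply/seteqP; split => x // _; apply: contrapT => xs; apply: all_in.
  by exists x; apply/negP.
by exists (x :: s); rewrite /= xs s_uniq s_size.
Qed.

Section Growth.
Variables (X : countType) (P : nat -> set (set X)) (n : nat -> nat).
Hypothesis hP : hierarchical P n.

Lemma Q_seq_common x (s : seq X) : exists r, forall y, y \in s -> Q P r x y.
Proof.
case: (hP) => _ [_ [_ [_ [_ connected]]]].
elim: s => [|y s [r1 Hr1]]; first by exists 0%N.
have [r2 [C [PC [Cx Cy]]]] := connected x y.
exists (maxn r1 r2) => z; rewrite inE => /orP [/eqP ->|zs].
  by apply: (Q_mono hP (leq_maxr r1 r2)); exists C.
exact: (Q_mono hP (leq_maxl r1 r2) (Hr1 z zs)).
Qed.

Lemma Nr_inv_diff_ge0 {R : realType} k :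
  0 <= (Nr n k)%:R^-1 - (Nr n k.+1)%:R^-1 :> R.
Proof.
rewrite subr_ge0 lef_pV2 ?posrE ?ltr0n ?(Nr_gt0 hP) // ler_nat.
by rewrite (Nr_mono hP (leqnSn k)).
Qed.

Hypothesis Xinf : infinite_set [set: X].

Lemma Nr_unbounded K : exists r, (K < Nr n r)%N.
Proof.
have [[|x s] [s_uniq s_size]] := infinite_uniq_seq K.+1 Xinf; first by [].
have [r Hr] := Q_seq_common x (x :: s).
exists r; rewrite -ltnS -s_size.
have -> : size (x :: s) = count (fun y => `[< Q P r x y >]) (x :: s).
  by rewrite -count_predT; apply: eq_in_count => y /Hr Qy; rewrite asboolT.
exact: (count_cluster_le hP (Q_cluster hP r x) s_uniq).
Qed.

Lemma Nr_inv_cvg0 {R : realType} : (fun r => ((Nr n r)%:R)^-1 : R) @ \oo --> 0.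
Proof.
have Nr_pos : \forall r \near \oo, 0 < ((Nr n r)%:R : R).
  by near=> r; rewrite ltr0n (Nr_gt0 hP).
apply/(gtr0_cvgV0 Nr_pos)/cvgrnyP/cvgnyPgt => K.
have [r0 Kr0] := Nr_unbounded K.
by near=> r; apply: leq_trans Kr0 (Nr_mono hP _); near: r; exists r0.
Unshelve. all: by end_near.
Qed.

Lemma cvg_series_Nr_inv_diff {R : realType} :
  cvgn (series (fun k => (Nr n k)%:R^-1 - (Nr n k.+1)%:R^-1 : R)).
Proof.
have -> : series (fun k => (Nr n k)%:R^-1 - (Nr n k.+1)%:R^-1 : R) =
    (fun m => 1 - (Nr n m)%:R^-1).
  apply/funext => m; rewrite /series /=.
  rewrite (@telescope_sumr_eq _ 0 m (fun k => - (Nr n k)%:R^-1)) //.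
    by rewrite (Nr0 hP) invr1 opprK addrC.
  by move=> k _; rewrite opprK addrC.
by apply/cvg_ex; exists (1 - 0); apply: cvgB; [exact: cvg_cst | exact: Nr_inv_cvg0].
Qed.

End Growth.

Lemma cvg0_mul_bounded (R : realType) (u c : R ^nat) M :
  u @ \oo --> 0 -> (forall k, `|c k| <= M) -> (fun k => u k * c k) @ \oo --> 0.
Proof.
move=> u0 cM; have uM0 : (fun k => `|u k| * M) @ \oo --> (0 : R).
  by rewrite -(mul0r M) -(normr0 R); apply: cvgMr_tmp; apply: cvg_norm.
have uM0N : (fun k => - (`|u k| * M)) @ \oo --> (0 : R).
  by rewrite -oppr0; apply: cvgN.
apply: (squeeze_cvgr _ uM0N uM0).
by near=> k; rewrite -ler_norml normrM ler_wpM2l.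
Unshelve. all: by end_near.
Qed.

Lemma cvg_series_bounded_mul (R : realType) (v c : R ^nat) M :
  (forall k, 0 <= v k) -> cvgn (series v) -> (forall k, `|c k| <= M) ->
  cvgn (series (fun k => v k * c k)).
Proof.
move=> v_ge0 v_cvg cM; apply: normed_cvg.
have M_ge0 : 0 <= M by apply: le_trans (cM 0%N).
apply: (series_le_cvg (v_ := M *: v)) => [k|k|k|]; rewrite /= ?normr_ge0 //.
- by rewrite mulr_ge0.
- by rewrite normrM ger0_norm // mulrC ler_wpM2r.
- exact: is_cvg_seriesZ.
Qed.

Theorem proposition2 (R : realType) (X : countType)
  (P : nat -> set (set X)) (n : nat -> nat) (p : nat -> R) (x0 : X)
  (s : nat -> seq X) (e : nat -> seq R) :
  infinite_set [set: X] ->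
  hierarchical P n ->
  p 0%N = 0 -> (forall r, (0 < r)%N -> 0 < p r) ->
  (fun m => \sum_(0 <= r < m) p r) @ \oo --> (1 : R) ->
  (forall r, uniq (s r) /\ [set x | x \in s r] = Q P r x0) ->
  (forall r, char_poly (compr_mx P n p (s r)) = \prod_(a <- e r) ('X - a%:P)) ->
  forall f : R -> R, continuous f -> (exists M, forall t, `|f t| <= M) ->
    (fun r => ((Nr n r)%:R)^-1 * \sum_(a <- e r) f a) @ \oo -->
      limn (fun m => \sum_(0 <= r < m) ((((Nr n r)%:R)^-1 - ((Nr n r.+1)%:R)^-1)
                         * f (\sum_(0 <= t < r.+1) p t))).
Proof.
move=> Xinf hP p0 p_gt0 p_sum1 s_Q e_char f _ [M fM].
pose u k := ((Nr n k)%:R^-1 - (Nr n k.+1)%:R^-1) * f (psum p k.+1).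
have u_cvg : cvgn (series u) := cvg_series_bounded_mul (Nr_inv_diff_ge0 hP)
  (cvg_series_Nr_inv_diff hP Xinf) (fun k => fM _).
have nu_split r : (Nr n r)%:R^-1 * \sum_(a <- e r) f a =
    series u r + (Nr n r)%:R^-1 * f (psum p r + tail_weight n p r).
  have [S_uniq S_Q] := s_Q r.
  exact: (mean_compr_eigenvalues hP p0 p_gt0 p_sum1 S_uniq S_Q f (e_char r)).
rewrite (funext nu_split) -[limn _]addr0; apply: cvgD; first exact: u_cvg.
exact: cvg0_mul_bounded (Nr_inv_cvg0 hP Xinf) (fun r => fM _).
Qed.
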